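(* Let $\alpha\colon\mathsf{Ring}\to\mathsf{CommRing}$ be a functor whose restriction to $\mathsf{CommRing}$ is isomorphic to the identity functor of $\mathsf{CommRing}$. Then for every ring $R$ admitting a ring homomorphism $\mathbb{C}\to R$ and every $n\geq 3$, one has $\alpha(\mathrm{M}_n(R))=0$. In particular, $\alpha$ is not faithful.
   Context: Rings are unital and ring homomorphisms preserve the identity; $\mathsf{Ring}$ and $\mathsf{CommRing}$ denote the categories of rings and of commutative rings. $\mathrm{M}_n(R)$ is the ring of $n\times n$ matrices over $R$. *)

From HB Require Import structures.
From mathcomp Require Import all_boot all_order all_algebra.
From mathcomp Require Import reals Rstruct complex.
Set Implicit Arguments. Unset Strict Implicit. Unset Printing Implicit Defensive.
Import GRing.Theory.
Local Open Scope ring_scope.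

(* Ring = category of (possibly zero) unital rings: pzRingType, morphisms
   {rmorphism A -> B} (unital ring homomorphisms).
   CommRing = comPzRingType, with the same morphisms.
   Equality of morphisms is pointwise equality of the underlying maps. *)

Definition CC : comPzRingType := (complex Rdefinitions.R : fieldType).

Record functor_Ring_CommRing := FunctorRC {
  Fobj :> pzRingType -> comPzRingType;
  Fmor : forall (A B : pzRingType), {rmorphism A -> B} -> {rmorphism Fobj A -> Fobj B};
  Fmor_id : forall (A : pzRingType) (f : {rmorphism A -> A}),
      f =1 id -> Fmor f =1 id;
  Fmor_comp : forall (A B C : pzRingType) (f : {rmorphism A -> B})
      (g : {rmorphism B -> C}) (h : {rmorphism A -> C}),
      (forall x, h x = g (f x)) -> forall y, Fmor h y = Fmor g (Fmor f y)
}.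

Definition restr_iso_id (F : functor_Ring_CommRing) : Prop :=
  exists (eta : forall A : comPzRingType, {rmorphism F A -> A})
         (theta : forall A : comPzRingType, {rmorphism A -> F A}),
    (forall A : comPzRingType, cancel (eta A) (theta A) /\ cancel (theta A) (eta A)) /\
    (forall (A B : comPzRingType) (f : {rmorphism A -> B}),
        forall x, eta B (Fmor F f x) = f (eta A x)).

Definition faithful (F : functor_Ring_CommRing) : Prop :=
  forall (A B : pzRingType) (f g : {rmorphism A -> B}),
    Fmor F f =1 Fmor F g -> f =1 g.

From HB Require Import structures.
From mathcomp Require Import all_boot all_order all_algebra perm ring.
From mathcomp Require Import reals Rstruct complex.
Set Implicit Arguments. Unset Strict Implicit. Unset Printing Implicit Defensive.
Import GRing.Theory Num.Theory.
Local Open Scope ring_scope.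

(* Let theta : id => F be the natural isomorphism on commutative rings. An
   idempotent e of a ring M gives a ring map Z^2 -> M, (a, b) |-> a e + b (1 - e);
   pushing (1, 0) through F and theta yields an idempotent of the commutative
   ring F M, and naturality shows that F carries every finite partition of unity
   of M to one of F M. For M = M_n(K), n >= 3, sqrt 2 in K, a Kochen-Specker
   configuration of rank-one projections in a 3 x 3 corner thus becomes a family
   of commuting idempotents on which the Boolean "exactly one per frame"
   constraints hold; as they admit no solution containing a given ray, that ray,
   and by symmetry every diagonal matrix unit, goes to 0. Since the diagonal
   units sum to 1, F M = 0. *)

Definition partition_of_unity (M : pzRingType) (I : finType) (P : I -> M) :=
  (forall i j, P i * P j = if i == j then P i else 0) /\ \sum_i P i = 1.

Lemma eq_partition_of_unity (M : pzRingType) (I : finType) (P Q : I -> M) :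
  P =1 Q -> partition_of_unity P -> partition_of_unity Q.
Proof.
move=> eqPQ [PM P1]; split=> [i j|]; first by rewrite -!eqPQ PM.
by rewrite -P1; apply: eq_bigr => i _; rewrite eqPQ.
Qed.

Lemma partition_of_unity_complement (M : pzRingType) (e : M) :
  e * e = e -> partition_of_unity (fun b : bool => if b then e else 1 - e).
Proof.
move=> ee; split; last by rewrite big_bool /= addrC subrK.
have e_ce : e * (1 - e) = 0 by rewrite mulrBr mulr1 ee subrr.
have ce_e : (1 - e) * e = 0 by rewrite mulrBl mul1r ee subrr.
have ce_ce : (1 - e) * (1 - e) = 1 - e by rewrite mulrBr mulr1 ce_e subr0.
by case; case.
Qed.

Lemma partition_of_unity_rcons (M : pzRingType) (es : seq M) :
  (forall i j, (i < size es)%N -> (j < size es)%N ->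
     es`_i * es`_j = if i == j then es`_i else 0) ->
  partition_of_unity
    (fun k : 'I_(size es).+1 => (rcons es (1 - \sum_(e <- es) e))`_k).
Proof.
move=> orth; set S := \sum_(e <- es) e.
have SE : S = \sum_(i < size es) es`_i by rewrite /S (big_nth 0) big_mkord.
have Se j : (j < size es)%N -> S * es`_j = es`_j.
  move=> lt_j; rewrite SE mulr_suml (bigD1 (Ordinal lt_j)) //= orth // eqxx.
  by rewrite big1 ?addr0 // => i ij; rewrite orth // ifN.
have eS j : (j < size es)%N -> es`_j * S = es`_j.
  move=> lt_j; rewrite SE mulr_sumr (bigD1 (Ordinal lt_j)) //= orth // eqxx.
  by rewrite big1 ?addr0 // => i ij; rewrite orth // ifN // eq_sym.
have SS : S * S = S.
  by rewrite {2 3}SE mulr_sumr; apply: eq_bigr => i _; apply: Se.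
split=> [i j|]; last first.
  rewrite -[RHS](subrK S 1) -[1 - S + S]addrC -big_rcons /=.
  by rewrite [RHS](big_nth 0) size_rcons big_mkord.
have nthE (k : 'I_(size es).+1) :
    (rcons es (1 - S))`_k = if (k < size es)%N then es`_k else 1 - S.
  rewrite nth_rcons; case: ltnP => // le_k.
  by rewrite eqn_leq le_k -ltnS ltn_ord.
rewrite !nthE.
case: ltnP => [lt_i|le_i]; case: ltnP => [lt_j|le_j].
- by rewrite orth // (inj_eq val_inj).
- rewrite ifN; first by rewrite mulrBr mulr1 eS // subrr.
  by apply: contraTneq (leq_trans lt_i le_j) => ->; rewrite ltnn.
- rewrite ifN; first by rewrite mulrBl mul1r Se // subrr.
  by apply: contraTneq (leq_trans lt_j le_i) => ->; rewrite ltnn.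
- have top (k : 'I_(size es).+1) : (size es <= k)%N -> k = ord_max.
    by move=> le_k; apply/val_inj/eqP; rewrite eqn_leq le_k -ltnS ltn_ord.
  rewrite (top i le_i) (top j le_j) eqxx.
  by rewrite mulrBr mulr1 mulrBl mul1r SS subrr subr0.
Qed.

Lemma partition_of_unity_delta (R : pzRingType) (n : nat) :
  partition_of_unity (fun k : 'I_n => delta_mx k k : 'M[R]_n).
Proof.
split=> [i j|].
  by rewrite -mulmxE mul_delta_mx_cond; case: eqP => [->|]; rewrite ?mulr1n ?mulr0n.
apply/matrixP => i j; rewrite summxE !mxE (bigD1 i) //= mxE eqxx /= big1 ?addr0.
  by rewrite eq_sym.
by move=> k ki; rewrite mxE eq_sym (negPf ki).
Qed.

(* Z^I, freely generated as a commutative ring by a partition of unity indexed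
   by I; the library declares its ring structure but not its commutativity. *)
Definition intfun (I : finType) := {ffun I -> int}.
HB.instance Definition _ (I : finType) := GRing.PzRing.on (intfun I).
HB.instance Definition _ (I : finType) :=
  GRing.PzRing_hasCommutativeMul.Build (intfun I) (@ffun_mulC I int).

Definition unit_vec (I : finType) (i : I) : intfun I := [ffun j => (i == j)%:R].

Lemma partition_of_unity_unit_vec (I : finType) : partition_of_unity (@unit_vec I).
Proof.
split=> [i j|].
  apply/ffunP => k; case: (eqVneq i j) => [<-|ij]; rewrite !ffunE -natrM mulnb.
    by rewrite andbb.
  by case: (eqVneq i k) => //= <-; rewrite eq_sym (negPf ij).
apply/ffunP => k; rewrite sum_ffunE (bigD1 k) //= !ffunE eqxx big1 ?addr0 //.
by move=> i /negPf ik; rewrite ffunE ik.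
Qed.

Section Comap.
Variables (I J : finType) (f : I -> J).

Definition comap (x : intfun J) : intfun I := [ffun i => x (f i)].

Fact comap_is_zmod_morphism : zmod_morphism comap.
Proof. by move=> x y; apply/ffunP => i; rewrite !ffunE. Qed.
Fact comap_is_monoid_morphism : monoid_morphism comap.
Proof. by split=> [|x y]; apply/ffunP => i; rewrite !ffunE. Qed.
HB.instance Definition _ := GRing.isZmodMorphism.Build _ _ comap comap_is_zmod_morphism.
HB.instance Definition _ := GRing.isMonoidMorphism.Build _ _ comap comap_is_monoid_morphism.
End Comap.

Section PartitionMorphism.
Variables (M : pzRingType) (I : finType) (P : I -> M).
Hypothesis partP : partition_of_unity P.

Definition partition_eval (x : intfun I) : M := \sum_i P i *~ x i.

Fact partition_eval_is_zmod_morphism : zmod_morphism partition_eval.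
Proof.
move=> x y; rewrite /partition_eval -sumrB; apply: eq_bigr => i _.
by rewrite !ffunE mulrzDr mulrNz.
Qed.

Fact partition_eval_is_monoid_morphism : monoid_morphism partition_eval.
Proof.
have [PM P1] := partP; split.
  by rewrite -P1; apply: eq_bigr => i _; rewrite ffunE.
move=> x y; rewrite /partition_eval mulr_suml; apply: eq_bigr => i _.
rewrite mulr_sumr (bigD1 i) //= big1 ?addr0 => [|j ji].
  by rewrite ffunE mulrzAl mulrzAr PM eqxx -mulrzA mulrC.
by rewrite mulrzAl mulrzAr PM eq_sym (negPf ji) !mul0rz.
Qed.

HB.instance Definition _ := GRing.isZmodMorphism.Build _ _ partition_eval
  partition_eval_is_zmod_morphism.
HB.instance Definition _ := GRing.isMonoidMorphism.Build _ _ partition_eval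
  partition_eval_is_monoid_morphism.

Definition partition_morphism : {rmorphism intfun I -> M} := partition_eval.

Lemma partition_morphism_unit_vec i : partition_morphism (unit_vec i) = P i.
Proof.
rewrite /= /partition_eval (bigD1 i) //= big1 ?addr0 => [|j ji].
  by rewrite ffunE eqxx mulr1z.
by rewrite ffunE eq_sym (negPf ji) mulr0z.
Qed.
End PartitionMorphism.

Lemma natural_section_of_restr_iso_id (F : functor_Ring_CommRing) :
  restr_iso_id F ->
  exists theta : forall A : comPzRingType, {rmorphism A -> F A},
    forall (A B : comPzRingType) (f : {rmorphism A -> B}) x,
      Fmor F f (theta A x) = theta B (f x).
Proof.
case=> eta [theta [iso eta_nat]]; exists theta => A B f x.
by apply: (can_inj (iso B).1); rewrite eta_nat (iso A).2 (iso B).2.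
Qed.

(* Junk value 0 on non-idempotents, so that [Fidem] is total. *)
Definition idem_of (M : pzRingType) (e : M) : M := if e * e == e then e else 0.

Lemma idem_ofE (M : pzRingType) (e : M) : e * e = e -> idem_of e = e.
Proof. by rewrite /idem_of => ->; rewrite eqxx. Qed.

Lemma idem_of_idem (M : pzRingType) (e : M) : idem_of e * idem_of e = idem_of e.
Proof. by rewrite /idem_of; case: eqP => // _; rewrite mulr0. Qed.

Section IdempotentsUnderF.
Variables (F : functor_Ring_CommRing) (theta : forall A : comPzRingType, {rmorphism A -> F A}).
Hypothesis theta_nat : forall (A B : comPzRingType) (f : {rmorphism A -> B}) x,
  Fmor F f (theta A x) = theta B (f x).

Definition push (A : comPzRingType) (M : pzRingType) (f : {rmorphism A -> M}) :
  {rmorphism A -> F M} := Fmor F f \o theta A.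

Lemma push_comp (A A' : comPzRingType) (M : pzRingType) (u : {rmorphism A' -> A})
    (f : {rmorphism A -> M}) (g : {rmorphism A' -> M}) :
  (forall x, g x = f (u x)) -> forall y, push g y = push f (u y).
Proof. by move=> gE y; rewrite /= (Fmor_comp gE) theta_nat. Qed.

Definition Fidem (M : pzRingType) (e : M) : F M :=
  push (partition_morphism (partition_of_unity_complement (idem_of_idem e)))
    (unit_vec true).

Lemma Fidem_idem (M : pzRingType) (e : M) : Fidem e * Fidem e = Fidem e.
Proof. by rewrite -rmorphM (partition_of_unity_unit_vec bool).1 eqxx. Qed.

Lemma Fidem_partition (M : pzRingType) (I : finType) (P : I -> M)
    (partP : partition_of_unity P) i :
  Fidem (P i) = push (partition_morphism partP) (unit_vec i).
Proof.
have [PM P1] := partP; have Pi_idem : P i * P i = P i by rewrite PM eqxx.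
(* Naturality along the map Z^bool -> Z^I induced by [fun j => j == i]. *)
have -> : unit_vec i = comap (fun j => j == i) (unit_vec true).
  by apply/ffunP => j; rewrite !ffunE eq_sym.
apply: push_comp => x; rewrite /= /partition_eval big_bool /= idem_ofE //.
rewrite (bigD1 i) //= ffunE eqxx; congr (_ + _).
have -> : 1 - P i = \sum_(j | j != i) P j by rewrite -P1 (bigD1 i) //= addrAC subrr add0r.
by rewrite mulrz_suml; apply: eq_bigr => j /negPf ji; rewrite ffunE ji.
Qed.

Lemma partition_of_unity_Fidem (M : pzRingType) (I : finType) (P : I -> M) :
  partition_of_unity P -> partition_of_unity (fun i => Fidem (P i)).
Proof.
move=> partP; have [UM U1] := partition_of_unity_unit_vec I.
split=> [i j|]; rewrite ?(Fidem_partition partP); last first.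
  by under eq_bigr do rewrite (Fidem_partition partP); rewrite -rmorph_sum U1 rmorph1.
by rewrite -rmorphM UM (fun_if (push _)) rmorph0.
Qed.
End IdempotentsUnderF.

Lemma clause_of_partition (M : pzRingType) (x : nat -> M) (c : seq nat) :
  partition_of_unity (fun k : 'I_(size c) => x (nth 0%N c k)) ->
  \sum_(i <- c) x i = 1 /\ {in c &, forall i j, i != j -> x i * x j = 0}.
Proof.
case=> orth sum1; split; first by rewrite (big_nth 0) big_mkord.
move=> i j ic jc ij.
have lt_i : (index i c < size c)%N by rewrite index_mem.
have lt_j : (index j c < size c)%N by rewrite index_mem.
have := orth (Ordinal lt_i) (Ordinal lt_j); rewrite /= !nth_index // ifN //.
by apply: contra ij => /eqP [eq_idx]; rewrite -(nth_index 0 ic) eq_idx nth_index.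
Qed.

(* [r] is a partial Boolean assignment, listed as decisions. A clause asks for
   exactly one true variable; [refutes r c] says that [r] already makes two
   variables of [c] true, or all of them false. *)
Definition refutes (r : seq (nat * bool)) (c : seq nat) : bool :=
  (1 < count (fun i => (i, true) \in r) c)%N || all (fun i => (i, false) \in r) c.

(* Case split along the variables of [o]; the [if] (rather than [||]) lets
   [vm_compute] prune refuted branches. *)
Fixpoint splitting_refutation (clauses : seq (seq nat)) (o : seq nat)
    (r : seq (nat * bool)) : bool :=
  if has (refutes r) clauses then true else
  if o is v :: o' then
    splitting_refutation clauses o' ((v, true) :: r) &&
    splitting_refutation clauses o' ((v, false) :: r)
  else false.

Section ExactlyOneClauses.
Variables (T : comPzRingType) (x : nat -> T) (clauses : seq (seq nat)).
Hypothesis x_idem : forall i, x i * x i = x i.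
Hypothesis clause_sum : forall c, c \in clauses -> \sum_(i <- c) x i = 1.
Hypothesis clause_orth :
  forall c, c \in clauses -> {in c &, forall i j, i != j -> x i * x j = 0}.
Hypothesis clauses_uniq : all uniq clauses.

Definition literal (d : nat * bool) : T := if d.2 then x d.1 else 1 - x d.1.
Definition monomial (r : seq (nat * bool)) : T := \prod_(d <- r) literal d.

Lemma literal_monomial d r : d \in r -> literal d * monomial r = monomial r.
Proof.
move=> rd; rewrite /monomial (big_rem d) //= mulrA; congr (_ * _).
rewrite /literal; case: d.2; first exact: x_idem.
by rewrite mulrBr mulr1 mulrBl mul1r x_idem subrr subr0.
Qed.

Lemma monomial_refuted r c : c \in clauses -> refutes r c -> monomial r = 0.
Proof.
move=> cls /orP [two_true|all_false].
  set p := fun i => (i, true) \in r.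
  have mem y : (y \in [seq i <- c | p i]) = p y && (y \in c) := mem_filter p y c.
  move: two_true mem (filter_uniq p (allP clauses_uniq c cls)); rewrite -size_filter.
  case: filter => [|i [|j t]] // _ mem uniq_ijt.
  have ij : i != j by move: uniq_ijt; rewrite /= inE => /andP [/norP []].
  have /andP [ir ic] : ((i, true) \in r) && (i \in c) by rewrite -mem !inE eqxx.
  have /andP [jr jc] : ((j, true) \in r) && (j \in c) by rewrite -mem !inE eqxx orbT.
  rewrite -(literal_monomial ir) -(literal_monomial jr) /= mulrA.
  by rewrite (clause_orth cls) ?mul0r.
rewrite -[monomial r]mulr1 -(clause_sum cls) mulr_sumr big_seq big1 // => i ic.
rewrite -(literal_monomial (allP all_false i ic)) /= mulrC mulrA.
by rewrite mulrBr mulr1 x_idem subrr mul0r.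
Qed.

Lemma monomial_splitting_refutation o r :
  splitting_refutation clauses o r -> monomial r = 0.
Proof.
elim: o r => [|v o IH] r /=; case: ifP => [/hasP [c cls] /(monomial_refuted cls)//|_] //.
case/andP => /IH mT /IH mF; rewrite -[monomial r]mul1r -(subrK (x v) 1) mulrDl.
by move: mT mF; rewrite /monomial !big_cons /= mulrC => -> ->; rewrite addr0.
Qed.

Lemma splitting_refutation_eq0 g o :
  splitting_refutation clauses o [:: (g, true)] -> x g = 0.
Proof. by move/monomial_splitting_refutation; rewrite /monomial big_seq1. Qed.
End ExactlyOneClauses.

(* [(a, b)] stands for [a + b * sqrt 2]. *)
Definition qr2 := (rat * rat)%type.
Definition qr2_add (a b : qr2) : qr2 := (a.1 + b.1, a.2 + b.2).
Definition qr2_mul (a b : qr2) : qr2 :=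
  (a.1 * b.1 + 2%:R * (a.2 * b.2), a.1 * b.2 + a.2 * b.1).

(* 3 x 3 matrices over Q(sqrt 2), as functions on [nat] so that they compute;
   only indices below 3 matter. *)
Definition mx3 := nat -> nat -> qr2.
Definition mx3_zero : mx3 := fun _ _ => (0, 0).
Definition mx3_unit (a b : nat) : mx3 :=
  fun i j => if (i == a) && (j == b) then (1, 0) else (0, 0).
Definition mx3_one : mx3 := fun i j => if i == j then (1, 0) else (0, 0).
Definition mx3_add (p q : mx3) : mx3 := fun i j => qr2_add (p i j) (q i j).
Definition mx3_mul (p q : mx3) : mx3 := fun i j =>
  qr2_add (qr2_mul (p i 0%N) (q 0%N j))
    (qr2_add (qr2_mul (p i 1%N) (q 1%N j)) (qr2_mul (p i 2%N) (q 2%N j))).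
Definition mx3_sum (ps : seq mx3) : mx3 := foldr mx3_add mx3_zero ps.
Definition mx3_eqb (p q : mx3) : bool :=
  all (fun i => all (fun j => p i j == q i j) (iota 0 3)) (iota 0 3).

Definition mx3_orthogonal (ps : seq mx3) : bool :=
  all (fun i => all (fun j =>
      mx3_eqb (mx3_mul (nth mx3_zero ps i) (nth mx3_zero ps j))
              (if i == j then nth mx3_zero ps i else mx3_zero))
    (iota 0 (size ps))) (iota 0 (size ps)).

Definition is_frame (ps : seq mx3) : bool :=
  mx3_orthogonal ps && mx3_eqb (mx3_sum ps) mx3_one.

Lemma mx3_eqbP p q : mx3_eqb p q -> forall a b : 'I_3, p a b = q a b.
Proof.
move=> pq a b; apply/eqP.
by apply: (allP (allP pq _ _)); rewrite mem_iota ltn_ord.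
Qed.

Section Embedding.
Variables (K : numFieldType) (s : K).
Hypothesis s_sqr : s * s = 2%:R.

Definition qr2_eval (a : qr2) : K := ratr a.1 + ratr a.2 * s.

Lemma qr2_evalD a b : qr2_eval (qr2_add a b) = qr2_eval a + qr2_eval b.
Proof. by rewrite /qr2_eval /= !rmorphD /=; ring. Qed.

Lemma qr2_evalM a b : qr2_eval (qr2_mul a b) = qr2_eval a * qr2_eval b.
Proof. by rewrite /qr2_eval /= !rmorphD !rmorphM /= ratr_nat -s_sqr; ring. Qed.

Lemma qr2_eval0 : qr2_eval (0, 0) = 0.
Proof. by rewrite /qr2_eval /= rmorph0 mul0r addr0. Qed.

Lemma qr2_eval1 : qr2_eval (1, 0) = 1.
Proof. by rewrite /qr2_eval /= rmorph1 rmorph0 mul0r addr0. Qed.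

Variables (n : nat) (io : 'I_3 -> 'I_n).
Hypothesis io_inj : injective io.

Definition mx3_embed (p : mx3) : 'M[K]_n :=
  \sum_(a < 3) \sum_(b < 3) qr2_eval (p a b) *: delta_mx (io a) (io b).

Lemma mx3_embed_eqb p q : mx3_eqb p q -> mx3_embed p = mx3_embed q.
Proof.
by move=> pq; apply: eq_bigr => a _; apply: eq_bigr => b _; rewrite (mx3_eqbP pq).
Qed.

Lemma mx3_embed0 : mx3_embed mx3_zero = 0.
Proof. by apply: big1 => a _; apply: big1 => b _; rewrite qr2_eval0 scale0r. Qed.

Lemma mx3_embedD p q : mx3_embed (mx3_add p q) = mx3_embed p + mx3_embed q.
Proof.
rewrite /mx3_embed -big_split; apply: eq_bigr => a _; rewrite -big_split.
by apply: eq_bigr => b _; rewrite qr2_evalD scalerDl.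
Qed.

Lemma mx3_embed_sum ps : mx3_embed (mx3_sum ps) = \sum_(p <- ps) mx3_embed p.
Proof.
elim: ps => [|p ps IH]; first by rewrite big_nil mx3_embed0.
by rewrite big_cons /= mx3_embedD IH.
Qed.

Lemma mx3_embed_unit (a b : 'I_3) : mx3_embed (mx3_unit a b) = delta_mx (io a) (io b).
Proof.
rewrite /mx3_embed (bigD1 a) //= (bigD1 b) //= /mx3_unit !eqxx qr2_eval1 scale1r.
rewrite big1 => [|c cb]; last by rewrite (negPf (cb : val c != b)) andbF qr2_eval0 scale0r.
rewrite big1 => [|c ca]; first by rewrite !addr0.
by apply: big1 => d _; rewrite (negPf (ca : val c != a)) qr2_eval0 scale0r.
Qed.

Lemma mx3_embedM p q : mx3_embed p * mx3_embed q = mx3_embed (mx3_mul p q).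
Proof.
have mulE (a d : 'I_3) : qr2_eval (mx3_mul p q a d) =
    \sum_(b < 3) qr2_eval (p a b) * qr2_eval (q b d).
  by rewrite !qr2_evalD !qr2_evalM !big_ord_recr big_ord0 /= add0r addrA.
rewrite -mulmxE /mx3_embed mulmx_suml; apply: eq_bigr => a _.
under [RHS]eq_bigr => d _ do rewrite mulE scaler_suml.
rewrite mulmx_suml [RHS]exchange_big /=; apply: eq_bigr => b _.
rewrite -scalemxAl mulmx_sumr (bigD1 b) //= [X in _ + X]big1 ?addr0 => [|c cb].
  rewrite mulmx_sumr scaler_sumr; apply: eq_bigr => d _.
  by rewrite -scalemxAr mul_delta_mx scalerA.
rewrite mulmx_sumr big1 // => d _.
by rewrite -scalemxAr mul_delta_mx_0 ?scaler0 // (inj_eq io_inj) eq_sym.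
Qed.

Lemma mx3_orthogonal_embed ps : mx3_orthogonal ps ->
  forall i j, (i < size ps)%N -> (j < size ps)%N ->
    (map mx3_embed ps)`_i * (map mx3_embed ps)`_j =
    if i == j then (map mx3_embed ps)`_i else 0.
Proof.
move=> orth i j lt_i lt_j; rewrite !(nth_map mx3_zero) // mx3_embedM.
have /(allP orth i) /allP /(_ j) : (i \in iota 0 (size ps)) by rewrite mem_iota.
rewrite mem_iota lt_j => /(_ isT) /mx3_embed_eqb ->.
by case: eqP => // _; rewrite mx3_embed0.
Qed.

Lemma frame_partition ps : is_frame ps ->
  partition_of_unity (fun k : 'I_(size (map mx3_embed ps)).+1 =>
    (rcons (map mx3_embed ps) (1 - mx3_embed mx3_one))`_k).
Proof.
case/andP => orth sum1; rewrite -(mx3_embed_eqb sum1) mx3_embed_sum.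
have -> : \sum_(p <- ps) mx3_embed p = \sum_(e <- map mx3_embed ps) e by rewrite big_map.
by apply: partition_of_unity_rcons; rewrite size_map; apply: mx3_orthogonal_embed.
Qed.
End Embedding.

(* The projection [v v^T / (v . v)] onto the line through [v]; the vectors used
   below have rational squared norms. *)
Definition ray_proj (v : seq qr2) : mx3 := fun i j =>
  let vv := qr2_add (qr2_mul v`_0 v`_0) (qr2_add (qr2_mul v`_1 v`_1) (qr2_mul v`_2 v`_2)) in
  let x := qr2_mul v`_i v`_j in (vv.1^-1 * x.1, vv.1^-1 * x.2).
(* A Kochen-Specker configuration in Q(sqrt 2)^3: 57 rays and 40 orthogonal
   frames among them, such that no choice of exactly one ray per frame contains
   ray 8, which is the first coordinate axis. [ks_order] is the branching order
   of the refutation. *)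
Definition ks_vectors : seq (seq qr2) :=
  [:: [:: (0%:Q, 0%:Q); (0%:Q, 0%:Q); (1%:Q, 0%:Q)];
  [:: (0%:Q, 0%:Q); (1%:Q, 0%:Q); (0%:Q, 0%:Q)];
  [:: (0%:Q, 0%:Q); (1%:Q, 0%:Q); (1%:Q, 0%:Q)];
  [:: (0%:Q, 0%:Q); (1%:Q, 0%:Q); ((-1%:Q), 0%:Q)];
  [:: (0%:Q, 0%:Q); (1%:Q, 0%:Q); (0%:Q, 1%:Q)];
  [:: (0%:Q, 0%:Q); (1%:Q, 0%:Q); (0%:Q, (-1%:Q))];
  [:: (0%:Q, 0%:Q); (0%:Q, 1%:Q); (1%:Q, 0%:Q)];
  [:: (0%:Q, 0%:Q); (0%:Q, 1%:Q); ((-1%:Q), 0%:Q)];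
  [:: (1%:Q, 0%:Q); (0%:Q, 0%:Q); (0%:Q, 0%:Q)];
  [:: (1%:Q, 0%:Q); (0%:Q, 0%:Q); (1%:Q, 0%:Q)];
  [:: (1%:Q, 0%:Q); (0%:Q, 0%:Q); ((-1%:Q), 0%:Q)];
  [:: (1%:Q, 0%:Q); (0%:Q, 0%:Q); (0%:Q, 1%:Q)];
  [:: (1%:Q, 0%:Q); (0%:Q, 0%:Q); (0%:Q, (-1%:Q))];
  [:: (1%:Q, 0%:Q); (1%:Q, 0%:Q); (0%:Q, 0%:Q)];
  [:: (1%:Q, 0%:Q); (1%:Q, 0%:Q); (0%:Q, 1%:Q)];
  [:: (1%:Q, 0%:Q); (1%:Q, 0%:Q); (0%:Q, (-1%:Q))];
  [:: (1%:Q, 0%:Q); ((-1%:Q), 0%:Q); (0%:Q, 0%:Q)];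
  [:: (1%:Q, 0%:Q); ((-1%:Q), 0%:Q); (0%:Q, 1%:Q)];
  [:: (1%:Q, 0%:Q); ((-1%:Q), 0%:Q); (0%:Q, (-1%:Q))];
  [:: (1%:Q, 0%:Q); (0%:Q, 1%:Q); (0%:Q, 0%:Q)];
  [:: (1%:Q, 0%:Q); (0%:Q, 1%:Q); (1%:Q, 0%:Q)];
  [:: (1%:Q, 0%:Q); (0%:Q, 1%:Q); ((-1%:Q), 0%:Q)];
  [:: (1%:Q, 0%:Q); (0%:Q, (-1%:Q)); (0%:Q, 0%:Q)];
  [:: (1%:Q, 0%:Q); (0%:Q, (-1%:Q)); (1%:Q, 0%:Q)];
  [:: (1%:Q, 0%:Q); (0%:Q, (-1%:Q)); ((-1%:Q), 0%:Q)];
  [:: (0%:Q, 1%:Q); (0%:Q, 0%:Q); (1%:Q, 0%:Q)];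
  [:: (0%:Q, 1%:Q); (0%:Q, 0%:Q); ((-1%:Q), 0%:Q)];
  [:: (0%:Q, 1%:Q); (1%:Q, 0%:Q); (0%:Q, 0%:Q)];
  [:: (0%:Q, 1%:Q); (1%:Q, 0%:Q); (1%:Q, 0%:Q)];
  [:: (0%:Q, 1%:Q); (1%:Q, 0%:Q); ((-1%:Q), 0%:Q)];
  [:: (0%:Q, 1%:Q); ((-1%:Q), 0%:Q); (0%:Q, 0%:Q)];
  [:: (0%:Q, 1%:Q); ((-1%:Q), 0%:Q); (1%:Q, 0%:Q)];
  [:: (0%:Q, 1%:Q); ((-1%:Q), 0%:Q); ((-1%:Q), 0%:Q)];
  [:: ((-3%:Q), 0%:Q); (0%:Q, 1%:Q); ((-1%:Q), 0%:Q)];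
  [:: (3%:Q, 0%:Q); (0%:Q, 1%:Q); ((-1%:Q), 0%:Q)];
  [:: (3%:Q, 0%:Q); (0%:Q, (-1%:Q)); ((-1%:Q), 0%:Q)];
  [:: ((-3%:Q), 0%:Q); (0%:Q, (-1%:Q)); ((-1%:Q), 0%:Q)];
  [:: ((-3%:Q), 0%:Q); (1%:Q, 0%:Q); (0%:Q, (-1%:Q))];
  [:: (3%:Q, 0%:Q); (1%:Q, 0%:Q); (0%:Q, (-1%:Q))];
  [:: (3%:Q, 0%:Q); ((-1%:Q), 0%:Q); (0%:Q, (-1%:Q))];
  [:: ((-3%:Q), 0%:Q); ((-1%:Q), 0%:Q); (0%:Q, (-1%:Q))];
  [:: (0%:Q, (-1%:Q)); (3%:Q, 0%:Q); (1%:Q, 0%:Q)];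
  [:: (0%:Q, 1%:Q); (3%:Q, 0%:Q); ((-1%:Q), 0%:Q)];
  [:: (0%:Q, 1%:Q); ((-3%:Q), 0%:Q); (1%:Q, 0%:Q)];
  [:: (0%:Q, (-1%:Q)); ((-3%:Q), 0%:Q); ((-1%:Q), 0%:Q)];
  [:: ((-1%:Q), 0%:Q); (3%:Q, 0%:Q); (0%:Q, (-1%:Q))];
  [:: (1%:Q, 0%:Q); ((-3%:Q), 0%:Q); (0%:Q, (-1%:Q))];
  [:: (1%:Q, 0%:Q); (3%:Q, 0%:Q); (0%:Q, 1%:Q)];
  [:: ((-1%:Q), 0%:Q); ((-3%:Q), 0%:Q); (0%:Q, 1%:Q)];
  [:: (0%:Q, 1%:Q); ((-1%:Q), 0%:Q); ((-3%:Q), 0%:Q)];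
  [:: (0%:Q, (-1%:Q)); (1%:Q, 0%:Q); ((-3%:Q), 0%:Q)];
  [:: (1%:Q, 0%:Q); (0%:Q, 1%:Q); ((-3%:Q), 0%:Q)];
  [:: ((-1%:Q), 0%:Q); (0%:Q, (-1%:Q)); ((-3%:Q), 0%:Q)];
  [:: (0%:Q, (-1%:Q)); ((-1%:Q), 0%:Q); (3%:Q, 0%:Q)];
  [:: (0%:Q, 1%:Q); (1%:Q, 0%:Q); (3%:Q, 0%:Q)];
  [:: ((-1%:Q), 0%:Q); (0%:Q, 1%:Q); (3%:Q, 0%:Q)];
  [:: (1%:Q, 0%:Q); (0%:Q, (-1%:Q)); (3%:Q, 0%:Q)]].

Definition ks_triples : seq (nat * nat * nat) := [::
  (0, 1, 8); (0, 13, 16); (0, 19, 30); (0, 22, 27); (1, 9, 10); (1, 11, 26);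
  (1, 12, 25); (2, 3, 8); (2, 29, 31); (3, 28, 32); (4, 7, 8); (4, 21, 33);
  (4, 23, 34); (5, 6, 8); (5, 20, 35); (5, 24, 36); (6, 15, 37); (6, 17, 38);
  (7, 14, 39); (7, 18, 40); (9, 21, 24); (10, 20, 23); (11, 29, 41); (11, 32, 42);
  (12, 28, 43); (12, 31, 44); (13, 17, 18); (14, 15, 16); (14, 26, 45); (15, 25, 46);
  (17, 26, 47); (18, 25, 48); (19, 31, 49); (19, 32, 50); (20, 30, 51); (21, 30, 52);
  (22, 28, 53); (22, 29, 54); (23, 27, 55); (24, 27, 56)]%N.

Definition ks_order : seq nat := [::
  57; 0; 1; 2; 3; 4; 7; 5; 6; 13; 16; 19; 30; 22; 27;
  9; 10; 11; 26; 12; 25; 29; 31; 28; 32; 21; 33; 23; 34; 14;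
  39; 18; 40; 20; 35; 24; 36; 15; 37; 17; 38; 49; 50; 51; 52;
  53; 54; 55; 56; 41; 42; 45; 47; 43; 44; 46; 48]%N.

Definition ks_ray (i : nat) : mx3 := ray_proj (nth [::] ks_vectors i).

(* Index 57 stands for the complement of the 3 x 3 corner, which completes each
   frame to a partition of unity of M_n. *)
Definition ks_clause (t : nat * nat * nat) : seq nat := [:: t.1.1; t.1.2; t.2; 57%N].

Definition ks_frame (t : nat * nat * nat) : bool :=
  [&& (t.1.1 < 57)%N, (t.1.2 < 57)%N, (t.2 < 57)%N &
      is_frame [:: ks_ray t.1.1; ks_ray t.1.2; ks_ray t.2]].

Lemma ks_frames : all ks_frame ks_triples.
Proof. by vm_compute. Qed.

Lemma ks_ray8 : mx3_eqb (ks_ray 8) (mx3_unit 0 0).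
Proof. by vm_compute. Qed.

Lemma ks_clauses_uniq : all uniq (map ks_clause ks_triples).
Proof. by vm_compute. Qed.

Lemma ks_refutation :
  splitting_refutation (map ks_clause ks_triples) ks_order [:: (8%N, true)].
Proof. by vm_compute. Qed.

Section KochenSpecker.
Variables (F : functor_Ring_CommRing)
  (theta : forall A : comPzRingType, {rmorphism A -> F A}).
Hypothesis theta_nat : forall (A B : comPzRingType) (f : {rmorphism A -> B}) x,
  Fmor F f (theta A x) = theta B (f x).
Variables (K : numFieldType) (s : K).
Hypothesis s_sqr : s * s = 2%:R.
Variables (n : nat) (io : 'I_3 -> 'I_n).
Hypothesis io_inj : injective io.

Local Notation E := (mx3_embed s io).

Definition ks_proj (i : nat) : 'M[K]_n :=
  if i == 57%N then 1 - E mx3_one else E (ks_ray i).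

Lemma ks_clause_partition t : t \in ks_triples ->
  partition_of_unity (fun k : 'I_4 => ks_proj (nth 0%N (ks_clause t) k)).
Proof.
move=> /(allP ks_frames); case: t => [[u v] w] /and4P [lt_u lt_v lt_w fr].
apply: eq_partition_of_unity (frame_partition s_sqr io_inj fr).
by move=> [[|[|[|[|m]]]] lt_m] //; rewrite /ks_proj /= ?ltn_eqF.
Qed.

Lemma Fidem_ks_corner : Fidem theta (delta_mx (io ord0) (io ord0) : 'M[K]_n) = 0.
Proof.
have -> : delta_mx (io ord0) (io ord0) = ks_proj 8.
  by rewrite /ks_proj /= (mx3_embed_eqb s io ks_ray8) (mx3_embed_unit s io ord0 ord0).
set x := fun i => Fidem theta (ks_proj i).
have clause_ok t : t \in ks_triples ->
    \sum_(i <- ks_clause t) x i = 1 /\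
    {in ks_clause t &, forall i j, i != j -> x i * x j = 0}.
  move=> tri; apply: (@clause_of_partition _ x (ks_clause t)).
  exact (partition_of_unity_Fidem theta_nat (ks_clause_partition tri)).
apply: (@splitting_refutation_eq0 _ x (map ks_clause ks_triples) _ _ _
  ks_clauses_uniq _ _ ks_refutation) => [i|c|c]; first exact: Fidem_idem.
  by case/mapP => t /clause_ok [] + _ ->.
by case/mapP => t /clause_ok [] _ + ->.
Qed.
End KochenSpecker.

Lemma ord3_embedding n (k : 'I_n) : (3 <= n)%N ->
  exists2 io : 'I_3 -> 'I_n, injective io & io ord0 = k.
Proof.
move=> le3n; pose w := widen_ord le3n.
have w_inj : injective w by move=> i j [] /val_inj.
exists (tperm (w ord0) k \o w); last by rewrite /= tpermL.
exact: inj_comp (@perm_inj _ _) w_inj.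
Qed.

Lemma F_matrix_trivial (F : functor_Ring_CommRing)
    (theta : forall A : comPzRingType, {rmorphism A -> F A})
    (theta_nat : forall (A B : comPzRingType) (f : {rmorphism A -> B}) x,
       Fmor F f (theta A x) = theta B (f x))
    (K : numFieldType) (s : K) (s_sqr : s * s = 2%:R) (n : nat) :
  (3 <= n)%N -> (1 : F 'M[K]_n) = 0.
Proof.
move=> le3n.
have [_ <-] := partition_of_unity_Fidem theta_nat (partition_of_unity_delta K n).
apply: big1 => k _; have [io io_inj <-] := ord3_embedding k le3n.
exact (Fidem_ks_corner theta_nat s_sqr io_inj).
Qed.

Lemma F_trivial_rmorphism (F : functor_Ring_CommRing) (A B : pzRingType)
    (f : {rmorphism A -> B}) :
  (1 : F A) = 0 -> (1 : F B) = 0.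
Proof. by move=> FA0; rewrite -(rmorph1 (Fmor F f)) FA0 rmorph0. Qed.

Lemma not_faithful_of_trivial (F : functor_Ring_CommRing) (A B : pzRingType)
    (f g : {rmorphism A -> B}) :
  (1 : F B) = 0 -> ~ f =1 g -> ~ faithful F.
Proof.
move=> FB0 fg faithF; apply: fg; apply: faithF => x.
by rewrite -[LHS]mulr1 -[RHS]mulr1 FB0 !mulr0.
Qed.

Theorem corollary4p3 (F : functor_Ring_CommRing) (HF : restr_iso_id F) :
  (forall (R : pzRingType) (phi : {rmorphism CC -> R}) (n : nat), (3 <= n)%N ->
     (1 : F 'M[R]_n) = 0) /\
  ~ faithful F.
Proof.
have [theta theta_nat] := natural_section_of_restr_iso_id HF.
have sqrt2 : sqrtC 2%:R * sqrtC 2%:R = 2%:R :> complex Rdefinitions.R.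
  by rewrite -expr2 sqrtCK.
have trivC n : (3 <= n)%N -> (1 : F 'M[CC]_n) = 0.
  exact (F_matrix_trivial theta_nat sqrt2 (n := n)).
split=> [R phi n le3n|].
  exact: F_trivial_rmorphism (map_mx phi : {rmorphism 'M[CC]_n -> 'M[R]_n}) (trivC n le3n).
have delta_idem (i : 'I_3) : (delta_mx i i : 'M[CC]_3) * delta_mx i i = delta_mx i i.
  by rewrite (partition_of_unity_delta CC 3).1 eqxx.
pose corner i := partition_morphism (partition_of_unity_complement (delta_idem i)).
apply: (not_faithful_of_trivial (f := corner 0) (g := corner 1) (trivC 3 isT)).
move=> /(_ (unit_vec true)); rewrite !partition_morphism_unit_vec.
by move=> /matrixP /(_ 0 0); rewrite !mxE /= => /eqP; rewrite oner_eq0.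
Qed.
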